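(* Suppose block indices are drawn independently and uniformly at random from $[n]$ (one draw per subroutine call by a worker), and an iteration is completed once updates for $\tau$ distinct blocks have been collected (updates for an already-collected block being overwritten/redundant). Then: (i) the expected number of subroutine calls (draws) needed to complete an iteration is $\tau+\sum_{i=1}^{\tau-1}\frac{i}{n-i}$; (ii) if $0.02n<\tau<0.6n$, then with probability at least $1-\exp(-n/60)$, no more than $2\tau$ draws suffice to complete an iteration. *)

From mathcomp Require Import all_boot all_order all_algebra.
From mathcomp Require Import all_classical all_reals all_analysis.
Set Implicit Arguments. Unset Strict Implicit. Unset Printing Implicit Defensive.
Import Order.TTheory GRing.Theory Num.Theory.
Local Open Scope ring_scope.

(* Draws are i.i.d. uniform on [n] = 'I_n.  T = number of draws (subroutine
   calls) until tau distinct blocks have been collected.  The event {T = k}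
   depends only on the first k draws: it holds iff the first k-1 draws contain
   fewer than tau distinct blocks and the first k draws contain at least tau
   distinct blocks. *)
Definition completes_at (n tau k : nat) (s : k.-tuple 'I_n) : bool :=
  (size (undup (take k.-1 s)) < tau)%N && (tau <= size (undup s))%N.

Definition prob_T_eq (R : realType) (n tau k : nat) : R :=
  #|[set s : k.-tuple 'I_n | completes_at tau s]|%:R / (n ^ k)%:R.

Definition prob_T_le (R : realType) (n tau m : nat) : R :=
  \sum_(k < m.+1) prob_T_eq R n tau k.

Definition expect_T (R : realType) (n tau : nat) : \bar R :=
  (\sum_(0 <= k <oo) ((k%:R * prob_T_eq R n tau k)%:E))%E.

From mathcomp Require Import all_boot all_order all_algebra.
From mathcomp Require Import all_classical all_reals all_analysis.
From mathcomp Require Import ring lra.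
Import Order.TTheory GRing.Theory Num.Theory.
Import numFieldNormedType.Exports.
Set Implicit Arguments. Unset Strict Implicit. Unset Printing Implicit Defensive.
Local Open Scope ring_scope.

(* Let D_k be the number of distinct blocks among the first k draws: it is a
   Markov chain that stays at d with probability d/n and moves to d + 1 with
   probability (n - d)/n, and T is its hitting time of tau.
   (i) With e d = sum_(d <= i < tau) n / (n - i), the quantity
   sum_(j <= k) j P(T = j) + E[k + e D_k; T > k] does not depend on k, and its
   second term vanishes as k grows because P(T > k) = O(1/k^2); so E[T] = e 0.
   (ii) For z >= 1 with tau z < n, h d = prod_(d <= i < tau) z (n - i) / (n - i z)
   satisfies h d = z E[h D_(k+1) | D_k = d] for d < tau, whence z^k P(T > k) <= h 0.
   Bounding log (h 0) by means of 1 + u <= e^u and sums of powers, and taking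
   z = w^2, gives P(T > 2 tau) <= z^(-2 tau) h 0 <= exp (n (L + 2 x (1/w - 1)))
   with x = tau / n and L = log_weight_rate x z; an explicit w on each of seven
   subintervals of (1/50, 3/5) makes this exponent at most -n/60. *)

Section RealInequalities.
Variable R : realFieldType.

Lemma bernoulli_ineq (x : R) k : 0 <= x -> 1 + k%:R * x <= (1 + x) ^+ k.
Proof.
move=> x_ge0; elim: k => [|k IH]; first by rewrite expr0 mul0r addr0.
rewrite exprS -natr1; have := ler_wpM2l (addr_ge0 ler01 x_ge0) IH.
have : 0 <= k%:R * x * x by rewrite !mulr_ge0.
nra.
Qed.

Lemma exprS_lower_bound (x : R) m :
  0 <= x -> x ^+ m.+1 + m.+1%:R * x ^+ m <= (x + 1) ^+ m.+1.
Proof.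
move=> x_ge0; elim: m => [|m IH]; first by rewrite expr0 expr1 mulr1.
rewrite [(x + 1) ^+ _]exprS; apply: le_trans (ler_wpM2l (addr_ge0 x_ge0 ler01) IH).
have -> : (x + 1) * (x ^+ m.+1 + m.+1%:R * x ^+ m) =
          x ^+ m.+2 + m.+2%:R * x ^+ m.+1 + m.+1%:R * x ^+ m.
  by rewrite -[m.+2%:R]natr1 !exprS; ring.
by rewrite lerDl mulr_ge0 ?exprn_ge0.
Qed.

Lemma sum_ord_expr_le m t : \sum_(i < t) (i%:R : R) ^+ m <= t%:R ^+ m.+1 / m.+1%:R.
Proof.
elim: t => [|t IH]; first by rewrite big_ord0 expr0n /= mul0r.
rewrite big_ord_recr /= ler_pdivlMr ?ltr0n // -[t.+1%:R]natr1.
have := exprS_lower_bound m (ler0n R t).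
have := ler_wpM2r (ler0n R m.+1) IH; rewrite divfK ?pnatr_eq0 //.
lra.
Qed.

Lemma div_one_subM_le (t z u : R) : 0 <= t -> 0 <= z -> t * z <= u -> u < 1 ->
  t / (1 - t * z) <= t + z * t ^+ 2 + z ^+ 2 * t ^+ 3 / (1 - u).
Proof.
move=> t_ge0 z_ge0 tz_le_u u_lt1.
rewrite ler_pdivrMr ?subr_gt0 ?(le_lt_trans tz_le_u) //.
set c := z ^+ 2 * t ^+ 3 / (1 - u).
have c_eq : c * (1 - u) = z ^+ 2 * t ^+ 3 by rewrite divfK // subr_eq0 gt_eqF.
have c_ge0 : 0 <= c by rewrite divr_ge0 ?mulr_ge0 ?exprn_ge0 // subr_ge0 ltW.
have : 0 <= c * (u - t * z) by rewrite mulr_ge0 // subr_ge0.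
rewrite !exprS !expr0 in c_eq *; nra.
Qed.

End RealInequalities.

Section SeriesLimits.
Local Open Scope classical_set_scope.
Variable R : realType.

Lemma eseries_EFin_cvg (u : nat -> R) (l : R) :
  (fun N => \sum_(0 <= k < N) u k) @ \oo --> l ->
  (\sum_(0 <= k <oo) (u k)%:E = l%:E)%E.
Proof.
move=> u_cvg.
have -> : (fun N => \sum_(0 <= k < N) (u k)%:E)%E =
          EFin \o (fun N => \sum_(0 <= k < N) u k).
  by apply/funext => N /=; rewrite sumEFin.
by rewrite EFin_lim ?(cvg_lim _ u_cvg) //; apply/cvg_ex; exists l.
Qed.

Lemma cvg_of_inv_rate (S : nat -> R) (l C : R) :
  (forall K, (0 < K)%N -> `|l - S K.+1| <= C / K%:R) -> S @ \oo --> l.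
Proof.
move=> rate; apply/cvgrPdist_le => eps eps_gt0.
set q := `|C| / eps.
have q_ge0 : 0 <= q by rewrite divr_ge0 // ltW.
have q_eps : q * eps = `|C| by rewrite divfK // gt_eqF.
apply: filterS (nbhs_infty_gtr (q + 2)) => -[|K] /=; first lra.
rewrite -natr1 => K_gt.
have K_gt0 : (0 < K)%N by rewrite -(ltr0n R); lra.
apply: le_trans (rate K K_gt0) _; rewrite ler_pdivrMr ?ltr0n //.
have := ler_norm C; nra.
Qed.
End SeriesLimits.

Section ChernoffExponent.
Variable R : realFieldType.

(* [n * log_weight_rate (tau / n) z] bounds [log (tail_weight z 0 / z ^+ tau)]. *)
Definition log_weight_rate (x z : R) : R :=
  (z - 1) * (x ^+ 2 / 2 + z * x ^+ 3 / 3 + z ^+ 2 * x ^+ 4 / (4 * (1 - x * z))).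

(* With [z = w ^+ 2] and [v = w^-1], [n * (chernoff_rate x w v - 1/60)] is the exponent
   of the bound on [P(T > 2 tau)]. *)
Definition chernoff_rate (x w v : R) : R :=
  log_weight_rate x (w ^+ 2) + 2 * x * (v - 1) + 1 / 60.

Lemma log_weight_rate_le (x b z : R) :
  0 <= x -> x <= b -> 1 <= z -> b * z < 1 -> log_weight_rate x z <= log_weight_rate b z.
Proof.
move=> x_ge0 x_le_b z_ge1 bz_lt1; rewrite /log_weight_rate.
have z_ge0 : 0 <= z by lra.
have xb k : x ^+ k <= b ^+ k by apply: lerXn2r; rewrite ?nnegrE //; lra.
have quartic : x ^+ 4 / (4 * (1 - x * z)) <= b ^+ 4 / (4 * (1 - b * z)).
  apply: (@le_trans _ _ (x ^+ 4 / (4 * (1 - b * z)))).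
    by rewrite ler_wpM2l ?exprn_ge0 // lef_pV2 ?posrE; nra.
  by rewrite ler_wpM2r ?invr_ge0 ?xb //; lra.
rewrite ler_wpM2l ?subr_ge0 //.
have := ler_wpM2l z_ge0 (xb 3%N); have := ler_wpM2l (exprn_ge0 2 z_ge0) quartic.
have := xb 2%N; lra.
Qed.

(* The denominator [1 - b w^2] is cleared so that numeric instances are within
   reach of [lra]. *)
Lemma chernoff_rate_window (x w v a b : R) :
    0 <= a -> a <= x -> x <= b -> 1 <= w -> w * v = 1 -> b * w ^+ 2 < 1 ->
    (w ^+ 2 - 1) * (b ^+ 2 / 2 + w ^+ 2 * b ^+ 3 / 3) * (1 - b * w ^+ 2)
    + (w ^+ 2 - 1) * w ^+ 4 * b ^+ 4 / 4
    + (2 * a * (v - 1) + 1 / 60) * (1 - b * w ^+ 2) <= 0 ->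
  [/\ 1 <= w, w * v = 1, x * w ^+ 2 < 1 & chernoff_rate x w v <= 0].
Proof.
move=> a_ge0 a_le_x x_le_b w_ge1 wv bw_lt1 check.
have w2_ge1 : 1 <= w ^+ 2 by rewrite expr2; nra.
have v_le1 : v <= 1 by nra.
split => //; first by nra.
have D_gt0 : 0 < 1 - b * w ^+ 2 by rewrite subr_gt0.
have endpoint : log_weight_rate b (w ^+ 2) + 2 * a * (v - 1) + 1 / 60 <= 0.
  rewrite -(pmulr_lle0 _ D_gt0); apply: le_trans check.
  rewrite le_eqVlt; apply/orP; left; apply/eqP; rewrite /log_weight_rate -exprM.
  by field; rewrite gt_eqF.
have := log_weight_rate_le (le_trans a_ge0 a_le_x) x_le_b w2_ge1 bw_lt1.
have : 0 <= (x - a) * (1 - v) by rewrite mulr_ge0 // subr_ge0.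
rewrite /chernoff_rate; lra.
Qed.

Lemma chernoff_rate_nonpos (x : R) : 1 / 50 < x -> x < 3 / 5 ->
  exists w v : R, [/\ 1 <= w, w * v = 1, x * w ^+ 2 < 1 & chernoff_rate x w v <= 0].
Proof.
move=> x_gt x_lt.
have [x_le|{}x_gt] := lerP x (1 / 25).
  exists (191 / 100), (100 / 191).
  by apply: (chernoff_rate_window (a := 1 / 50) (b := 1 / 25)); lra.
have [x_le|{}x_gt] := lerP x (11 / 100).
  exists (36 / 25), (25 / 36).
  by apply: (chernoff_rate_window (a := 1 / 25) (b := 11 / 100)); lra.
have [x_le|{}x_gt] := lerP x (13 / 50).
  exists (121 / 100), (100 / 121).
  by apply: (chernoff_rate_window (a := 11 / 100) (b := 13 / 50)); lra.
have [x_le|{}x_gt] := lerP x (21 / 50).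
  exists (109 / 100), (100 / 109).
  by apply: (chernoff_rate_window (a := 13 / 50) (b := 21 / 50)); lra.
have [x_le|{}x_gt] := lerP x (53 / 100).
  exists (107 / 100), (100 / 107).
  by apply: (chernoff_rate_window (a := 21 / 50) (b := 53 / 100)); lra.
have [x_le|{}x_gt] := lerP x (29 / 50).
  exists (53 / 50), (50 / 53).
  by apply: (chernoff_rate_window (a := 53 / 100) (b := 29 / 50)); lra.
exists (21 / 20), (20 / 21).
by apply: (chernoff_rate_window (a := 29 / 50) (b := 3 / 5)); lra.
Qed.
End ChernoffExponent.

Section TupleCount.
Variable T : finType.

Lemma card_tupleS_rcons k (P : pred (k.+1.-tuple T)) :
  #|[set s | P s]| = \sum_(t : k.-tuple T) #|[set x | P [tuple of rcons t x]]|.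
Proof.
pose f (p : k.-tuple T * T) : k.+1.-tuple T := [tuple of rcons p.1 p.2].
have f_inj : injective f.
  by move=> [a x] [b y] /(congr1 val) /= /rcons_inj [] /val_inj -> ->.
have f_bij : bijective f.
  by apply: inj_card_bij f_inj _; rewrite card_prod !card_tuple expnSr.
rewrite -sum1_card (reindex f); last exact: onW_bij.
transitivity (\sum_(t : k.-tuple T) \sum_(x : T) if P (f (t, x)) then 1 else 0)%N.
  rewrite big_mkcond /= pair_big /=.
  by apply: eq_bigr => -[t x] _ /=; rewrite inE.
apply: eq_bigr => t _; rewrite -big_mkcond /= -sum1_card.
by apply: eq_bigl => x; rewrite inE.
Qed.

Lemma card_rcons (s : seq T) x : #|rcons s x| = ((x \notin s) + #|s|)%N.
Proof. by rewrite -cardU1; apply: eq_card => y; rewrite !inE mem_rcons in_cons. Qed.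

Lemma size_undup_card (s : seq T) : size (undup s) = #|s|.
Proof.
by rewrite -(card_uniqP (undup_uniq s)); apply: eq_card => y; rewrite mem_undup.
Qed.

Lemma card_notin (s : seq T) : #|[set x | x \notin s]| = (#|T| - #|s|)%N.
Proof.
by rewrite -(cardC (mem s)) addKn; apply: eq_card => x; rewrite !inE.
Qed.

End TupleCount.

Lemma sum_indicator_mul (I : finType) (b : pred I) c :
  (\sum_(i : I) b i * c = #|[set i | b i]| * c)%N.
Proof.
rewrite -sum_nat_const [RHS]big_mkcond; apply: eq_bigr => i _.
by rewrite inE; case: (b i); rewrite ?mul1n ?mul0n.
Qed.

Section DistinctCount.
Variable n : nat.

Definition ndistinct k d := #|[set s : k.-tuple 'I_n | #|s| == d]|.

Lemma ndistinct0 d : ndistinct 0 d = (d == 0%N).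
Proof.
rewrite /ndistinct; case: d => [|d] /=.
  rewrite -[1%N](card_tuple 0 'I_n).
  by apply: eq_card => s; rewrite !inE tuple0 card0.
by apply: eq_card0 => s; rewrite !inE tuple0 card0.
Qed.

Lemma card_rcons_distinct (t : seq 'I_n) d :
  #|[set x | #|rcons t x| == d]| =
  ((#|t| == d) * #|t| + (#|t|.+1 == d) * (n - #|t|))%N.
Proof.
have split_in : [set x | #|rcons t x| == d] =
    [set x in t | #|t| == d] :|: [set x | (x \notin t) && (#|t|.+1 == d)].
  apply/setP => x; rewrite !inE card_rcons.
  by case: (x \in t); rewrite /= ?add0n ?add1n ?orbF.
rewrite split_in cardsU (_ : _ :&: _ = finset.set0) ?cards0 ?subn0; last first.
  by apply/setP => x; rewrite !inE; case: (x \in t); rewrite ?andbF.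
congr (_ + _)%N.
  case: (#|t| == d); rewrite ?mul1n ?mul0n; last by apply: eq_card0 => x; rewrite !inE andbF.
  by apply: eq_card => x; rewrite !inE andbT.
case: (#|t|.+1 == d); rewrite ?mul1n ?mul0n; last by apply: eq_card0 => x; rewrite !inE andbF.
by rewrite -[n in (n - _)%N]card_ord -card_notin; apply: eq_card => x; rewrite !inE andbT.
Qed.

Lemma ndistinctS k d : ndistinct k.+1 d =
  (ndistinct k d * d + if d is d'.+1 then ndistinct k d' * (n - d') else 0)%N.
Proof.
rewrite /ndistinct card_tupleS_rcons.
transitivity (\sum_(t : k.-tuple 'I_n)
    ((#|t| == d) * d + (#|t|.+1 == d) * (n - d.-1)))%N.
  apply: eq_bigr => t _; rewrite card_rcons_distinct -[#|tval t|]/(#|t|).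
  case: (eqVneq #|t| d) => [<-|_]; first by rewrite (gtn_eqF (ltnSn _)).
  by case: eqP => [<-|].
rewrite big_split /= sum_indicator_mul; congr (_ + _)%N.
case: d => [|d]; first by rewrite big1.
by under eq_bigr => t _ do rewrite eqSS; rewrite sum_indicator_mul.
Qed.

Lemma card_completes_atS k tau : (0 < tau)%N ->
  #|[set s : k.+1.-tuple 'I_n | completes_at tau s]| =
  (ndistinct k tau.-1 * (n - tau.-1))%N.
Proof.
move=> tau_gt0; rewrite card_tupleS_rcons.
transitivity (\sum_(t : k.-tuple 'I_n) (#|t| == tau.-1) * (n - tau.-1))%N;
  last by rewrite sum_indicator_mul.
apply: eq_bigr => t _.
have take_rcons x : take k (rcons t x) = t.
  by rewrite -cats1 take_size_cat // size_tuple.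
transitivity #|[set x | (#|t| == tau.-1) && (x \notin t)]|.
  apply: eq_card => x; rewrite !inE /completes_at /= take_rcons !size_undup_card.
  rewrite card_rcons; case: (x \in t); rewrite /= ?andbT ?andbF.
    by rewrite ltnNge andNb.
  by rewrite -(prednK tau_gt0) add1n !ltnS -eqn_leq.
case: (#|t| =P tau.-1) => [<-|_] /=; last by apply: eq_card0 => x; rewrite inE.
by rewrite mul1n -[n in (n - _)%N]card_ord -card_notin; apply: eq_card => x; rewrite !inE.
Qed.

End DistinctCount.

Section DistinctChain.
Variables (R : realType) (n tau : nat).
Hypotheses (tau_gt0 : (0 < tau)%N) (tau_le_n : (tau <= n)%N).

Let n_gt0 : (0 < n)%N. Proof. exact: leq_trans tau_le_n. Qed.
Let n_neq0 : (n%:R : R) != 0. Proof. by rewrite pnatr_eq0 -lt0n. Qed.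
Let expn_neq0 k : ((n ^ k)%:R : R) != 0.
Proof. by rewrite pnatr_eq0 -lt0n expn_gt0 n_gt0. Qed.

Definition distinct_prob k d : R := (ndistinct n k d)%:R / (n ^ k)%:R.

Definition chain_step (w : nat -> R) d : R :=
  d%:R / n%:R * w d + (n - d)%:R / n%:R * w d.+1.

Lemma distinct_prob_ge0 k d : 0 <= distinct_prob k d.
Proof. by rewrite divr_ge0. Qed.

Lemma distinct_prob0 d : distinct_prob 0 d = (d == 0%N)%:R.
Proof. by rewrite /distinct_prob ndistinct0 expn0 divr1. Qed.

Lemma distinct_probS k d : distinct_prob k.+1 d = d%:R / n%:R * distinct_prob k d +
  (if d is d'.+1 then (n - d')%:R / n%:R * distinct_prob k d' else 0).
Proof.
rewrite /distinct_prob ndistinctS natrD natrM expnS natrM.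
by case: d => [|d]; rewrite ?natrM; field; rewrite n_neq0 expn_neq0.
Qed.

Lemma prob_T_eq0 : prob_T_eq R n tau 0 = 0.
Proof.
rewrite /prob_T_eq (_ : #|_| = 0%N) ?mul0r //; apply: eq_card0 => s.
by rewrite !inE /completes_at tuple0 /= andbC leqNgt tau_gt0.
Qed.

Lemma prob_T_eqS k :
  prob_T_eq R n tau k.+1 = distinct_prob k tau.-1 * ((n - tau.-1)%:R / n%:R).
Proof.
rewrite /prob_T_eq /distinct_prob card_completes_atS // natrM expnS natrM.
by field; rewrite n_neq0 expn_neq0.
Qed.

Lemma sum_distinct_prob0 (w : nat -> R) : \sum_(d < tau) distinct_prob 0 d * w d = w 0%N.
Proof.
case: tau tau_gt0 => // t _; rewrite big_ord_recl /= distinct_prob0 eqxx mul1r.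
by rewrite big1 ?addr0 // => i _; rewrite distinct_prob0 mul0r.
Qed.

Lemma sum_distinct_probS (w : nat -> R) k :
  \sum_(d < tau) distinct_prob k.+1 d * w d + prob_T_eq R n tau k.+1 * w tau =
  \sum_(d < tau) distinct_prob k d * chain_step w d.
Proof.
rewrite prob_T_eqS; case: tau tau_gt0 => // t _ /=.
under eq_bigr => d _ do rewrite distinct_probS mulrDl.
under [RHS]eq_bigr => d _ do rewrite mulrDr.
rewrite !big_split /= [X in _ + X + _]big_ord_recl [X in _ = _ + X]big_ord_recr /=.
rewrite mul0r add0r -addrA; congr (_ + _); first by apply: eq_bigr => d _; ring.
by congr (_ + _); [apply: eq_bigr => d _; rewrite /bump /= !add0n | ]; ring.
Qed.

Lemma prob_T_le_add_tail k :
  prob_T_le R n tau k + \sum_(d < tau) distinct_prob k d = 1.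
Proof.
elim: k => [|k IH].
  rewrite /prob_T_le big_ord1 prob_T_eq0 add0r.
  by rewrite -[RHS](sum_distinct_prob0 (fun _ => 1)); apply: eq_bigr => d _; rewrite mulr1.
rewrite /prob_T_le big_ord_recr /= -/(prob_T_le R n tau k) -{}[RHS]IH -addrA.
congr (_ + _); rewrite addrC -[prob_T_eq _ _ _ _]mulr1.
under eq_bigr do rewrite -[distinct_prob _ _]mulr1.
rewrite (sum_distinct_probS (fun _ => 1)); apply: eq_bigr => d _.
have d_le_n : (d <= n)%N by rewrite ltnW // (leq_trans _ tau_le_n).
by rewrite /chain_step !mulr1 -mulrDl -natrD subnKC // divff // mulr1.
Qed.

Lemma weighted_tail_le (z : R) (h : nat -> R) k : 0 < z -> 0 <= h tau ->
    (forall d, (d < tau)%N -> h d = z * chain_step h d) ->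
  z ^+ k * \sum_(d < tau) distinct_prob k d * h d <= h 0%N.
Proof.
move=> z_gt0 h_tau_ge0 h_eq; elim: k => [|k IH]; first by rewrite mul1r sum_distinct_prob0.
apply: le_trans IH; rewrite exprSr -mulrA; apply: ler_wpM2l; first by rewrite exprn_ge0 ?ltW.
have -> : \sum_(d < tau) distinct_prob k d * h d =
          z * \sum_(d < tau) distinct_prob k d * chain_step h d.
  by rewrite mulr_sumr; apply: eq_bigr => d _; rewrite [in LHS]h_eq // mulrCA.
rewrite -sum_distinct_probS mulrDr lerDl.
by apply: mulr_ge0; [exact: ltW | apply: mulr_ge0 => //; exact: divr_ge0].
Qed.

Definition expected_remaining d : R := \sum_(d <= i < tau) n%:R / (n - i)%:R.

Lemma chain_step_expected_remaining k d : (d < tau)%N ->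
  chain_step (fun d => k.+1%:R + expected_remaining d) d = k%:R + expected_remaining d.
Proof.
move=> d_lt_tau; have d_lt_n : (d < n)%N := leq_trans d_lt_tau tau_le_n.
have n_sub_d : (n%:R - d%:R : R) != 0 by rewrite subr_eq0 eqr_nat gtn_eqF.
rewrite /chain_step /expected_remaining (big_ltn d_lt_tau) (natrB _ (ltnW d_lt_n)) -natr1.
by field; rewrite n_neq0 n_sub_d.
Qed.

Lemma partial_mean_add_tail k :
  \sum_(j < k.+1) j%:R * prob_T_eq R n tau j +
  \sum_(d < tau) distinct_prob k d * (k%:R + expected_remaining d) =
  expected_remaining 0.
Proof.
elim: k => [|k IH].
  rewrite big_ord1 prob_T_eq0 mulr0 add0r.
  by rewrite (sum_distinct_prob0 (fun d => 0%:R + expected_remaining d)) add0r.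
rewrite big_ord_recr /= -{}[RHS]IH -addrA; congr (_ + _).
transitivity (\sum_(d < tau) distinct_prob k d *
                chain_step (fun d => k.+1%:R + expected_remaining d) d).
  rewrite -sum_distinct_probS /expected_remaining [in X in _ * (_ + X)]big_geq //.
  by rewrite addr0 addrC mulrC.
by apply: eq_bigr => d _; rewrite chain_step_expected_remaining.
Qed.

End DistinctChain.

Section TailWeight.
Variables (R : realType) (n tau : nat).
Hypotheses (tau_gt0 : (0 < tau)%N) (tau_le_n : (tau <= n)%N).

Let n_neq0 : (n%:R : R) != 0.
Proof. by rewrite pnatr_eq0 -lt0n (leq_trans tau_gt0). Qed.

Definition tail_weight (z : R) d : R :=
  \prod_(d <= i < tau) (z * (n - i)%:R / (n%:R - i%:R * z)).

Variable z : R.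
Hypotheses (z_ge1 : 1 <= z) (iz_lt_n : forall i, (i < tau)%N -> i%:R * z < n%:R).

Lemma tail_weight_ge1 d : 1 <= tail_weight z d.
Proof.
rewrite /tail_weight big_nat_cond; apply: (big_ind (fun x => 1 <= x)) => //.
  by move=> x y x_ge1 y_ge1; rewrite -[1]mulr1 ler_pM.
move=> i /andP[/andP[_ i_lt_tau] _]; have := iz_lt_n i_lt_tau => iz_lt.
rewrite ler_pdivlMr ?subr_gt0 // mul1r natrB ?(leq_trans (ltnW i_lt_tau)) //.
have : 0 <= (z - 1) * n%:R by rewrite mulr_ge0 // subr_ge0.
lra.
Qed.

Lemma tail_weight_step d : (d < tau)%N ->
  tail_weight z d = z * chain_step n (tail_weight z) d.
Proof.
move=> d_lt_tau; rewrite /tail_weight /chain_step big_ltn //.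
have d_sub_z : (n%:R - d%:R * z : R) != 0 by rewrite subr_eq0 gt_eqF ?iz_lt_n.
rewrite natrB ?(leq_trans (ltnW d_lt_tau)) //.
by field; rewrite n_neq0 d_sub_z.
Qed.

Lemma tail_mass_le k : z ^+ k * \sum_(d < tau) distinct_prob R n k d <= tail_weight z 0.
Proof.
have z_gt0 : 0 < z by apply: lt_le_trans z_ge1.
apply: le_trans (weighted_tail_le tau_gt0 tau_le_n k z_gt0 _ tail_weight_step).
- apply: ler_wpM2l; first by rewrite exprn_ge0 ?ltW.
  apply: ler_sum => d _; rewrite ler_peMr ?distinct_prob_ge0 //; exact: tail_weight_ge1.
- exact: le_trans (tail_weight_ge1 tau).
Qed.
End TailWeight.

Section Expectation.
Variables (R : realType) (n tau : nat).
Hypotheses (tau_gt0 : (0 < tau)%N) (tau_le_n : (tau <= n)%N).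

Local Notation E := (expected_remaining R n tau).

Lemma expected_remaining_bounds d : (d <= tau)%N -> 0 <= E d <= E 0%N.
Proof.
move=> d_le_tau; have terms_ge0 i : (0 : R) <= n%:R / (n - i)%:R by rewrite divr_ge0.
rewrite /expected_remaining (big_cat_nat (n := d) (m := 0)) //= lerDr.
by apply/andP; split; apply: sumr_ge0.
Qed.

Lemma expected_remaining0 :
  E 0%N = tau%:R + \sum_(1 <= i < tau) i%:R / (n - i)%:R.
Proof.
rewrite /expected_remaining big_nat_cond.
rewrite (eq_bigr (fun i => 1 + i%:R / (n - i)%:R)); last first.
  move=> i /andP[/andP[_ i_lt_tau] _]; have i_lt_n := leq_trans i_lt_tau tau_le_n.
  rewrite -{1}(subnK (ltnW i_lt_n)) natrD mulrDl divff //.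
  by rewrite pnatr_eq0 subn_eq0 -ltnNge.
rewrite -big_nat_cond big_split /= sumr_const_nat subn0.
by rewrite (big_ltn tau_gt0) /= mul0r add0r.
Qed.

Lemma tail_mass_sqr_bounded :
  exists C : R, forall K, K%:R ^+ 2 * \sum_(d < tau) distinct_prob R n K d <= C.
Proof.
have n_ge1 : 1 <= (n%:R : R) by rewrite ler1n (leq_trans tau_gt0).
set dl : R := (4 * n%:R)^-1.
have dl_gt0 : 0 < dl by rewrite invr_gt0; lra.
have dl_n : dl * n%:R = 1 / 4 by rewrite /dl; field; rewrite gt_eqF //; lra.
set z := (1 + dl) ^+ 2.
have z_ge1 : 1 <= z by rewrite /z; nra.
have iz_lt_n i : (i < tau)%N -> i%:R * z < n%:R.
  move=> i_lt_tau; have : (i.+1 <= n)%N := leq_trans i_lt_tau tau_le_n.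
  rewrite -(ler_nat R) -natr1 => i_lt_n.
  have := ler0n R i; rewrite /z; nra.
exists (tail_weight n tau z 0 / dl ^+ 2) => K.
rewrite ler_pdivlMr ?exprn_gt0 //.
apply: le_trans (tail_mass_le tau_gt0 tau_le_n z_ge1 iz_lt_n K).
have K_dl : (K%:R * dl) ^+ 2 <= z ^+ K.
  have dl_ge0 := ltW dl_gt0.
  rewrite /z -exprM mulnC exprM; apply: lerXn2r; rewrite ?nnegrE ?mulr_ge0 //.
    by rewrite exprn_ge0 // addr_ge0.
  by apply: le_trans (bernoulli_ineq K dl_ge0); rewrite lerDr.
rewrite mulrAC -exprMn; apply: ler_wpM2r K_dl.
by apply: sumr_ge0 => d _; exact: distinct_prob_ge0.
Qed.

Lemma expect_T_expected_remaining : expect_T R n tau = (E 0%N)%:E.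
Proof.
have [C tail_sqr] := tail_mass_sqr_bounded.
have [E_ge0 _] := andP (expected_remaining_bounds (leq0n tau)).
rewrite /expect_T; apply: eseries_EFin_cvg.
apply: (@cvg_of_inv_rate _ _ _ ((1 + E 0%N) * C)) => K K_gt0.
rewrite big_mkord; have := partial_mean_add_tail R tau_gt0 tau_le_n K.
set S := \sum_(j < K.+1) _; set T := \sum_(d < tau) _ => mean_eq.
have -> : E 0%N - S = T by rewrite -mean_eq addrC addKr.
set P := \sum_(d < tau) distinct_prob R n K d.
have P_ge0 : 0 <= P by apply: sumr_ge0 => d _; exact: distinct_prob_ge0.
have remaining_bounds (d : 'I_tau) := expected_remaining_bounds (ltnW (ltn_ord d)).
have T_ge0 : 0 <= T.
  apply: sumr_ge0 => d _; rewrite mulr_ge0 ?distinct_prob_ge0 ?addr_ge0 //.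
  by case/andP: (remaining_bounds d).
have T_le : T <= (K%:R + E 0%N) * P.
  rewrite /P mulr_sumr; apply: ler_sum => d _; rewrite mulrC ler_wpM2r ?distinct_prob_ge0 //.
  by rewrite lerD2l; case/andP: (remaining_bounds d).
have K_ge1 : 1 <= (K%:R : R) by rewrite ler1n.
have := tail_sqr K; rewrite -/P ger0_norm // ler_pdivlMr ?ltr0n // => KP_le.
apply: le_trans (ler_wpM2r (ler0n _ K) T_le) _.
have : K%:R * P <= K%:R ^+ 2 * P by rewrite expr2 -mulrA ler_peMl ?mulr_ge0.
nra.
Qed.
End Expectation.

Section ChernoffBound.
Variables (R : realType) (n tau : nat).
Hypotheses (tau_gt0 : (0 < tau)%N) (tau_le_n : (tau <= n)%N).

Let n_gt0 : (0 : R) < n%:R. Proof. by rewrite ltr0n (leq_trans tau_gt0). Qed.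

Local Notation ratio i := (i%:R / n%:R : R).
Local Notation x := (ratio tau).

Lemma sum_ratio_expr_le m :
  \sum_(i < tau) ratio i ^+ m <= n%:R * x ^+ m.+1 / m.+1%:R.
Proof.
under eq_bigr do rewrite expr_div_n.
rewrite -mulr_suml; apply: le_trans (ler_wpM2r _ (sum_ord_expr_le R m tau)) _.
  by rewrite invr_ge0 exprn_ge0 ?ltW.
rewrite le_eqVlt; apply/orP; left; apply/eqP; rewrite expr_div_n [n%:R ^+ m.+1]exprS.
have n_neq0 : (n%:R : R) != 0 by rewrite gt_eqF.
by field; rewrite addrC natr1 pnatr_eq0 expf_neq0 ?n_neq0.
Qed.

Section FixedWeight.
Variable z : R.
Hypotheses (z_ge1 : 1 <= z) (xz_lt1 : x * z < 1).

Let z_ge0 : 0 <= z := le_trans ler01 z_ge1.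

Let ratio_mul_le i : (i <= tau)%N -> ratio i * z <= x * z.
Proof. by move=> i_le_tau; rewrite ler_wpM2r // ler_pM2r ?invr_gt0 // ler_nat. Qed.

Lemma ratio_mul_lt1 i : (i <= tau)%N -> ratio i * z < 1.
Proof. by move=> /ratio_mul_le /le_lt_trans; apply. Qed.

Lemma natr_mul_lt_n i : (i < tau)%N -> i%:R * z < n%:R.
Proof.
by move=> /ltnW /ratio_mul_lt1; rewrite mulrAC ltr_pdivrMr // mul1r.
Qed.

Lemma sum_ratio_div_le :
  \sum_(i < tau) ratio i / (1 - ratio i * z) <=
  n%:R * (x ^+ 2 / 2 + z * x ^+ 3 / 3 + z ^+ 2 * x ^+ 4 / (4 * (1 - x * z))).
Proof.
set c := z ^+ 2 / (1 - x * z).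
have c_ge0 : 0 <= c by rewrite divr_ge0 ?exprn_ge0 // subr_ge0 ltW.
apply: (@le_trans _ _ (\sum_(i < tau) (ratio i + z * ratio i ^+ 2 + c * ratio i ^+ 3))).
  apply: ler_sum => i _; rewrite /c [z ^+ 2 / _ * _]mulrAC.
  apply: div_one_subM_le; rewrite ?divr_ge0 //.
  exact/ratio_mul_le/ltnW.
rewrite !big_split /= -!mulr_sumr.
have S1 : \sum_(i < tau) ratio i <= n%:R * x ^+ 2 / 2.
  by under eq_bigr do rewrite -[ratio _]expr1; exact: (sum_ratio_expr_le 1).
have S2 := ler_wpM2l z_ge0 (sum_ratio_expr_le 2).
have S3 := ler_wpM2l c_ge0 (sum_ratio_expr_le 3).
apply: le_trans (lerD (lerD S1 S2) S3) _.
rewrite le_eqVlt; apply/orP; left; apply/eqP; rewrite /c.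
by field; rewrite !gt_eqF // subr_gt0; move: xz_lt1; rewrite mulrAC ltr_pdivrMr // mul1r.
Qed.

Lemma tail_weight0_le :
  tail_weight n tau z 0 <= z ^+ tau * expR (n%:R * log_weight_rate x z).
Proof.
have factor_le i : (i < tau)%N ->
    0 <= z * (n - i)%:R / (n%:R - i%:R * z) <=
    z * expR ((z - 1) * (ratio i / (1 - ratio i * z))).
  move=> i_lt_tau; have i_z := natr_mul_lt_n i_lt_tau.
  have n_sub_iz : (0 : R) < n%:R - i%:R * z by rewrite subr_gt0.
  rewrite divr_ge0 ?mulr_ge0 ?(ltW n_sub_iz) //=.
  have -> : z * (n - i)%:R / (n%:R - i%:R * z) =
            z * (1 + (z - 1) * (ratio i / (1 - ratio i * z))).
    rewrite natrB ?(leq_trans (ltnW i_lt_tau)) //; field.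
    by rewrite !gt_eqF // subr_gt0 ratio_mul_lt1 // ltnW.
  by apply: ler_wpM2l => //; exact: expR_ge1Dx.
rewrite /tail_weight big_mkord.
apply: (@le_trans _ _ (\prod_(i < tau) (z * expR ((z - 1) * (ratio i / (1 - ratio i * z)))))).
  by apply: ler_prod => i _; exact: factor_le.
rewrite big_split /= prodr_const card_ord -expR_sum ler_wpM2l ?exprn_ge0 // ler_expR.
rewrite -mulr_sumr /log_weight_rate mulrCA ler_wpM2l ?subr_ge0 //.
exact: sum_ratio_div_le.
Qed.
End FixedWeight.

Lemma tail_mass_2tau_le (w v : R) : 1 <= w -> w * v = 1 -> x * w ^+ 2 < 1 ->
  \sum_(d < tau) distinct_prob R n (2 * tau) d <=
  expR (n%:R * (log_weight_rate x (w ^+ 2) + 2 * x * (v - 1))).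
Proof.
move=> w_ge1 wv xw_lt1; set z := w ^+ 2 in xw_lt1 *.
have z_ge1 : 1 <= z by rewrite /z expr2; nra.
have v_gt0 : 0 < v by nra.
set P := \sum_(d < tau) _.
have z_tau_P : z ^+ tau * P <= expR (n%:R * log_weight_rate x z).
  rewrite -(ler_pM2l (exprn_gt0 tau (lt_le_trans ltr01 z_ge1))) mulrA -exprD addnn -mul2n.
  apply: le_trans (tail_weight0_le z_ge1 xw_lt1).
  exact: (tail_mass_le tau_gt0 tau_le_n z_ge1 (@natr_mul_lt_n z z_ge1 xw_lt1) (2 * tau)).
have v_z : v ^+ (2 * tau) * z ^+ tau = 1.
  by rewrite /z -exprM mulnC -exprMn mulrC wv expr1n.
have v_le : v ^+ (2 * tau) <= expR ((2 * tau)%:R * (v - 1)).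
  rewrite expRM_natl; apply: lerXn2r; rewrite ?nnegrE ?expR_ge0 //; first exact: ltW.
  by have := expR_ge1Dx (v - 1); rewrite addrC subrK.
have P_ge0 : 0 <= P by apply: sumr_ge0 => d _; exact: distinct_prob_ge0.
have -> : P = v ^+ (2 * tau) * (z ^+ tau * P) by rewrite mulrA v_z mul1r.
apply: le_trans (ler_pM (exprn_ge0 _ (ltW v_gt0)) _ v_le z_tau_P) _.
  by rewrite mulr_ge0 // exprn_ge0 // (le_trans ler01).
rewrite -expRD ler_expR le_eqVlt; apply/orP; left; apply/eqP.
by rewrite natrM; field; rewrite gt_eqF.
Qed.

Lemma prob_T_le_2tau :
  (2 / 100 : R) * n%:R < tau%:R -> (tau%:R : R) < (6 / 10) * n%:R ->
  1 - expR (- ((n%:R : R) / 60)) <= prob_T_le R n tau (2 * tau).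
Proof.
move=> tau_gt tau_lt.
have x_gt : 1 / 50 < x by rewrite ltr_pdivlMr //; lra.
have x_lt : x < 3 / 5 by rewrite ltr_pdivrMr //; lra.
have [w [v [w_ge1 wv xw_lt1 rate_le0]]] := chernoff_rate_nonpos x_gt x_lt.
have := prob_T_le_add_tail R tau_gt0 tau_le_n (2 * tau).
have := tail_mass_2tau_le w_ge1 wv xw_lt1.
suff : expR (n%:R * (log_weight_rate x (w ^+ 2) + 2 * x * (v - 1))) <= expR (- (n%:R / 60)).
  lra.
rewrite ler_expR; have : n%:R * chernoff_rate x w v <= 0 by rewrite pmulr_rle0.
rewrite /chernoff_rate; lra.
Qed.
End ChernoffBound.

Theorem proposition1 (R : realType) (n tau : nat) :
  (0 < tau)%N -> (tau <= n)%N ->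
  expect_T R n tau =
    ((tau%:R : R) + \sum_(1 <= i < tau) ((i%:R : R) / (n - i)%:R))%:E
  /\
  ((2 / 100 : R) * n%:R < tau%:R -> (tau%:R : R) < (6 / 10) * n%:R ->
   1 - expR (- ((n%:R : R) / 60)) <= prob_T_le R n tau (2 * tau)).
Proof.
move=> tau_gt0 tau_le_n; split; last exact: prob_T_le_2tau.
by rewrite (expect_T_expected_remaining R tau_gt0 tau_le_n) expected_remaining0.
Qed.
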